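(* Let $\rho\in\mathbb R$, let $\mathbf a=\{a_n\}_{n\ge1}$ be an admissible sequence of non-negative real numbers, and let $\kappa_{\mathbf a}(s,u)=\sum_{n\ge1}a_nn^{-s-\bar u}$ be the diagonal Dirichlet series kernel on $\mathbb H_\rho\times\mathbb H_\rho$ with reproducing kernel Hilbert space $\mathscr H_{\mathbf a}$; write $\kappa_{\mathbf a,u}=\kappa_{\mathbf a}(\cdot,u)$. Then for every real $\alpha>\rho$, the family $\{\kappa_{\mathbf a,\alpha+ib}:b\in\mathbb R\}$ is a linearly independent total subset of $\mathscr H_{\mathbf a}$.
   Context: $\mathbb H_\rho=\{\Re s>\rho\}$. The diagonal kernel $\kappa_{\mathbf a}$ is assumed convergent on $\mathbb H_\rho\times\mathbb H_\rho$; $\mathscr H_{\mathbf a}$ is the Hilbert space of functions on $\mathbb H_\rho$ with $\kappa_{\mathbf a}(\cdot,t)\in\mathscr H_{\mathbf a}$ and $\langle f,\kappa_{\mathbf a}(\cdot,t)\rangle=f(t)$. A real sequence $\mathbf a$ is admissible if $\mathrm{supp}(\mathbf a)=\{n:a_n\ne0\}$ is an infinite subset of $\mathbb N$ closed under multiplication and contains $p,q\ne1$ with $\gcd(p,q)=1$. Total: the closed linear span is the whole space. *)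

From Stdlib Require Import Reals Lra List.
From Coquelicot Require Import Coquelicot.
Open Scope R_scope.

(** n^{-z} for a positive integer n and complex z:
    n^{-z} = e^{-x ln n} (cos (y ln n) - i sin (y ln n)),  z = x + i y. *)
Definition npow_neg (n : nat) (z : C) : C :=
  (exp (- Re z * ln (INR n)) * cos (Im z * ln (INR n)),
   - (exp (- Re z * ln (INR n)) * sin (Im z * ln (INR n)))).

(** The coefficient sequence a = (a_n)_{n >= 1} is modelled by a : nat -> R,
    the value a 0 being ignored everywhere. *)

(** General term a_n n^{-s - conj u}, reindexed from 0 (term k is n = k+1). *)
Definition kterm (a : nat -> R) (s u : C) (k : nat) : C :=
  Cmult (RtoC (a (S k))) (npow_neg (S k) (Cplus s (Cconj u))).

(** kappa_a(s,u) = sum_{n>=1} a_n n^{-s-conj u} (sum of the real and imaginary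
    parts; equals the complex sum whenever the series converges). *)
Definition kappa (a : nat -> R) (s u : C) : C :=
  (Series (fun k => Re (kterm a s u k)), Series (fun k => Im (kterm a s u k))).

Definition Hrho (rho : R) : Type := { s : C | rho < Re s }.

Definition supp (a : nat -> R) (n : nat) : Prop := (1 <= n)%nat /\ a n <> 0.

Definition admissible (a : nat -> R) : Prop :=
  (forall N : nat, exists n : nat, (N < n)%nat /\ supp a n) /\
  (forall m n : nat, supp a m -> supp a n -> supp a (m * n)) /\
  (exists p q : nat, supp a p /\ supp a q /\ p <> 1%nat /\ q <> 1%nat /\
                     Nat.gcd p q = 1%nat).

Definition kernel_convergent (rho : R) (a : nat -> R) : Prop :=
  forall s u : C, rho < Re s -> rho < Re u -> ex_series (kterm a s u).

Definition fzero {T : Type} : T -> C := fun _ => RtoC 0.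
Definition fadd {T : Type} (f g : T -> C) : T -> C := fun s => Cplus (f s) (g s).
Definition fscale {T : Type} (c : C) (f : T -> C) : T -> C := fun s => Cmult c (f s).
Definition fsub {T : Type} (f g : T -> C) : T -> C :=
  fun s => Cminus (f s) (g s).

Definition hnorm {T : Type} (ip : (T -> C) -> (T -> C) -> C) (f : T -> C) : R :=
  sqrt (Re (ip f f)).

Record HilbertFunctionSpace {T : Type} (H : (T -> C) -> Prop)
    (ip : (T -> C) -> (T -> C) -> C) : Prop := {
  hfs_zero : H fzero;
  hfs_add : forall f g, H f -> H g -> H (fadd f g);
  hfs_scale : forall c f, H f -> H (fscale c f);
  hfs_lin : forall c f g h, H f -> H g -> H h ->
      ip (fadd (fscale c f) g) h = Cplus (Cmult c (ip f h)) (ip g h);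
  hfs_sym : forall f g, H f -> H g -> ip g f = Cconj (ip f g);
  hfs_pos : forall f, H f -> Im (ip f f) = 0 /\ 0 <= Re (ip f f);
  hfs_def : forall f, H f -> ip f f = RtoC 0 -> forall s, f s = RtoC 0;
  hfs_complete : forall F : nat -> T -> C, (forall n, H (F n)) ->
      (forall eps : R, 0 < eps -> exists N : nat, forall m n : nat,
          (N <= m)%nat -> (N <= n)%nat -> hnorm ip (fsub (F m) (F n)) < eps) ->
      exists g, H g /\ forall eps : R, 0 < eps -> exists N : nat, forall n : nat,
          (N <= n)%nat -> hnorm ip (fsub (F n) g) < eps
}.

(** H (with ip) is the reproducing kernel Hilbert space of the kernel
    kappa_a on H_rho: it contains each kappa_a(., t) and
    <f, kappa_a(., t)> = f(t).  (By Moore-Aronszajn such H is unique.) *)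
Definition kfun (rho : R) (a : nat -> R) (u : C) : Hrho rho -> C :=
  fun s => kappa a (proj1_sig s) u.

Definition is_RKHS (rho : R) (a : nat -> R) (H : (Hrho rho -> C) -> Prop)
    (ip : (Hrho rho -> C) -> (Hrho rho -> C) -> C) : Prop :=
  HilbertFunctionSpace H ip /\
  (forall t : Hrho rho, H (kfun rho a (proj1_sig t))) /\
  (forall (f : Hrho rho -> C) (t : Hrho rho), H f ->
      ip f (kfun rho a (proj1_sig t)) = f t).

Definition klincomb (rho : R) (a : nat -> R) (alpha : R) (bs : list R)
    (c : R -> C) : Hrho rho -> C :=
  fold_right (fun b acc => fadd (fscale (c b) (kfun rho a (alpha, b))) acc)
             fzero bs.

From Stdlib Require Import Reals List Lra Lia ZArith Classical
  FunctionalExtensionality IndefiniteDescription.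
From Coquelicot Require Import Coquelicot.
Open Scope R_scope.

(* Both claims are read off Dirichlet coefficients: by the reproducing property,
   ||sum_j c_j kappa_(a,u_j)||^2 = sum_n a_n |sum_j c_j n^(-conj u_j)|^2.

   Independence: if sum_b c_b kappa_(a,alpha+ib) = 0, then sum_b c_b n^(ib) = 0 for every n in
   supp(a), in particular for all n = p^j q^k.  As p and q are coprime, log p / log q is
   irrational, so the characters (j, k) |-> p^(ijb) q^(ikb) of N^2 are pairwise distinct and
   Dedekind's lemma gives c_b = 0.

   Totality: averaging kappa_(a,alpha+ij dl) against m^(-ij dl) over 0 <= j < N isolates the
   frequency m, since for n <> m the phases dl (log n - log m) are nonzero and small; summing
   over m <= M approximates kappa_(a,t) in norm by kernels on the line Re s = alpha.  Hence a
   function orthogonal to the kernels on that line is orthogonal to every kappa_(a,t), so it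
   vanishes, and the projection theorem (from completeness) turns this into density. *)

Lemma C_ext (x y : C) : Re x = Re y -> Im x = Im y -> x = y.
Proof. destruct x, y; simpl; intros; subst; reflexivity. Qed.

Ltac ceq := apply C_ext; unfold Cplus, Cmult, Cconj, Copp, Cminus, RtoC, Re, Im; simpl; ring.

Lemma Cmult_integral (x y : C) : (x * y)%C = 0%C -> x = 0%C \/ y = 0%C.
Proof.
  intros E; destruct (classic (x = 0%C)) as [|Hx]; auto.
  destruct (classic (y = 0%C)) as [|Hy]; auto.
  destruct (Cmult_neq_0 x y Hx Hy E).
Qed.

Definition cis (th : R) : C := (cos th, sin th).

Lemma cis_0 : cis 0 = 1%C.
Proof. unfold cis; rewrite cos_0, sin_0; reflexivity. Qed.

Lemma cis_add x y : cis (x + y) = (cis x * cis y)%C.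
Proof. unfold cis; rewrite cos_plus, sin_plus; ceq. Qed.

Lemma Cmod_cis x : Cmod (cis x) = 1.
Proof.
  unfold Cmod, cis; simpl. pose proof (sin2_cos2 x) as E; unfold Rsqr in E.
  replace (cos x * (cos x * 1) + sin x * (sin x * 1)) with 1 by lra. apply sqrt_1.
Qed.

Lemma cis_neq_0 x : cis x <> 0%C.
Proof. intros E; apply (f_equal Cmod) in E; rewrite Cmod_cis, Cmod_0 in E; lra. Qed.

Lemma cis_eq_1 th : cis th = 1%C -> exists k : Z, th = IZR k * PI.
Proof. intros E; apply sin_eq_0_0; apply (f_equal Im) in E; simpl in E; exact E. Qed.

Lemma cis_neq_1 th : th <> 0 -> Rabs th < PI -> cis th <> 1%C.
Proof.
  intros Hne Hpi E. destruct (cis_eq_1 th E) as [k ->].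
  destruct (Z.eq_dec k 0) as [->|Hk]; [apply Hne; ring|].
  assert (1 <= Rabs (IZR k)) by (rewrite <- abs_IZR; apply IZR_le; lia).
  pose proof PI_RGT_0.
  rewrite Rabs_mult, (Rabs_right PI) in Hpi by lra. nra.
Qed.

Lemma npow_neg_add n z w : npow_neg n (z + w)%C = (npow_neg n z * npow_neg n w)%C.
Proof.
  unfold npow_neg; destruct z as [x y], w as [u v]; simpl.
  replace (- (x + u) * ln (INR n)) with (- x * ln (INR n) + - u * ln (INR n)) by ring.
  replace ((y + v) * ln (INR n)) with (y * ln (INR n) + v * ln (INR n)) by ring.
  rewrite exp_plus, cos_plus, sin_plus; ceq.
Qed.

Lemma npow_neg_conj n z : npow_neg n (Cconj z) = Cconj (npow_neg n z).
Proof.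
  unfold npow_neg; destruct z as [x y]; simpl.
  replace (- y * ln (INR n)) with (- (y * ln (INR n))) by ring.
  rewrite cos_neg, sin_neg; ceq.
Qed.

Lemma npow_neg_cis n x y :
  npow_neg n (x, y) = (RtoC (exp (- x * ln (INR n))) * cis (- y * ln (INR n)))%C.
Proof.
  unfold npow_neg, cis; simpl.
  replace (- y * ln (INR n)) with (- (y * ln (INR n))) by ring.
  rewrite cos_neg, sin_neg; ceq.
Qed.

Lemma npow_neg_real n x : npow_neg n (x, 0) = RtoC (exp (- x * ln (INR n))).
Proof. rewrite npow_neg_cis, Ropp_0, Rmult_0_l, cis_0; ring. Qed.

Lemma Cmod_npow_neg n z : Cmod (npow_neg n z) = exp (- Re z * ln (INR n)).
Proof.
  destruct z as [x y]; rewrite npow_neg_cis, Cmod_mult, Cmod_cis, Cmod_R, Rabs_right.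
  - simpl; ring.
  - left; apply exp_pos.
Qed.

Definition csum {A : Type} (f : A -> C) (l : list A) : C :=
  fold_right (fun x acc => (f x + acc)%C) 0%C l.
Definition rsum {A : Type} (f : A -> R) (l : list A) : R :=
  fold_right (fun x acc => f x + acc) 0 l.

Lemma csum_ext {A} (f g : A -> C) l : (forall x, In x l -> f x = g x) -> csum f l = csum g l.
Proof. induction l; simpl; intros Hfg; auto. rewrite Hfg, IHl; auto. Qed.

Lemma csum_app {A} (f : A -> C) l1 l2 : csum f (l1 ++ l2) = (csum f l1 + csum f l2)%C.
Proof. induction l1; simpl; [ring|]. rewrite IHl1; ring. Qed.

Lemma csum_map {A} {B} (f : B -> C) (g : A -> B) l : csum f (map g l) = csum (fun x => f (g x)) l.
Proof. induction l; simpl; auto. rewrite IHl; reflexivity. Qed.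

Lemma csum_flat_map {A} {B} (f : B -> C) (g : A -> list B) l :
  csum f (flat_map g l) = csum (fun x => csum f (g x)) l.
Proof. induction l; simpl; auto. rewrite csum_app, IHl; reflexivity. Qed.

Lemma csum_mult_l {A} (c : C) (f : A -> C) l : (c * csum f l)%C = csum (fun x => c * f x)%C l.
Proof. induction l; simpl; [ring|]. rewrite <- IHl; ring. Qed.

Lemma csum_mult_r {A} (c : C) (f : A -> C) l : (csum f l * c)%C = csum (fun x => f x * c)%C l.
Proof. induction l; simpl; [ring|]. rewrite <- IHl; ring. Qed.

Lemma csum_plus {A} (f g : A -> C) l : csum (fun x => f x + g x)%C l = (csum f l + csum g l)%C.
Proof. induction l; simpl; [ring|]. rewrite IHl; ring. Qed.

Lemma csum_zero {A} (f : A -> C) l : (forall x, In x l -> f x = 0%C) -> csum f l = 0%C.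
Proof. induction l; simpl; intros Hf; auto. rewrite Hf, IHl; auto; ring. Qed.

Lemma csum_conj {A} (f : A -> C) l : Cconj (csum f l) = csum (fun x => Cconj (f x)) l.
Proof. induction l; simpl; [ceq|]. rewrite Cplus_conj, IHl; reflexivity. Qed.

Lemma Re_csum {A} (f : A -> C) l : Re (csum f l) = rsum (fun x => Re (f x)) l.
Proof. induction l; simpl; auto. rewrite <- IHl; reflexivity. Qed.

Lemma Cmod_csum_le {A} (f : A -> C) l : Cmod (csum f l) <= rsum (fun x => Cmod (f x)) l.
Proof.
  induction l; simpl; [rewrite Cmod_0; lra|].
  eapply Rle_trans; [apply Cmod_triangle|lra].
Qed.

Lemma rsum_le {A} (f g : A -> R) l : (forall x, In x l -> f x <= g x) -> rsum f l <= rsum g l.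
Proof.
  induction l; simpl; intros Hfg; [lra|].
  apply Rplus_le_compat; auto.
Qed.

Lemma rsum_mult_l {A} (c : R) (f : A -> R) l : rsum (fun x => c * f x) l = c * rsum f l.
Proof. induction l; simpl; [ring|]. rewrite IHl; ring. Qed.

Lemma rsum_nonneg {A} (f : A -> R) l : (forall x, In x l -> 0 <= f x) -> 0 <= rsum f l.
Proof.
  induction l; simpl; intros Hf; [lra|].
  apply Rplus_le_le_0_compat; auto.
Qed.

Lemma csum_remove_one {A} (f : A -> C) (x0 : A) (dec : forall x y : A, {x = y} + {x <> y}) l :
  NoDup l -> In x0 l ->
  csum f l = (f x0 + csum (fun x => if dec x x0 then 0 else f x)%C l)%C.
Proof.
  induction l as [|x l IH]; intros Hnd Hin; [destruct Hin|].
  inversion Hnd as [|? ? Hx Hnd']; subst; simpl.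
  destruct (dec x x0) as [->|Hne].
  - rewrite (csum_ext (fun x => if dec x x0 then 0%C else f x) f l); [ring|].
    intros y Hy; destruct (dec y x0); [subst; contradiction|reflexivity].
  - destruct Hin as [->|Hin]; [contradiction|]. rewrite IH; auto; ring.
Qed.

Lemma is_series_Re (f : nat -> C) l : is_series f l -> is_series (fun k => Re (f k)) (Re l).
Proof.
  intros Hf. unfold is_series.
  apply filterlim_ext with (fun n => Re (sum_n f n)).
  { induction x; [rewrite !sum_O|rewrite !sum_Sn, <- IHx]; reflexivity. }
  intros P [eps HP]. apply (Hf (fun z => P (Re z))). exists eps.
  intros y [Hy _]. apply HP, Hy.
Qed.

Lemma is_series_Im (f : nat -> C) l : is_series f l -> is_series (fun k => Im (f k)) (Im l).
Proof.
  intros Hf. unfold is_series.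
  apply filterlim_ext with (fun n => Im (sum_n f n)).
  { induction x; [rewrite !sum_O|rewrite !sum_Sn, <- IHx]; reflexivity. }
  intros P [eps HP]. apply (Hf (fun z => P (Im z))). exists eps.
  intros y [_ Hy]. apply HP, Hy.
Qed.

Lemma is_series_Rplus (u v : nat -> R) U V :
  is_series u U -> is_series v V -> is_series (fun k => u k + v k) (U + V).
Proof. apply (@is_series_plus R_AbsRing R_NormedModule). Qed.

Lemma is_series_Rmult_l (c : R) (u : nat -> R) U :
  is_series u U -> is_series (fun k => c * u k) (c * U).
Proof. apply (@is_series_scal_l R_AbsRing R_NormedModule). Qed.

Lemma is_series_rsum {A} (f : A -> nat -> R) (v : A -> R) l :
  (forall x, In x l -> is_series (f x) (v x)) ->
  is_series (fun k => rsum (fun x => f x k) l) (rsum v l).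
Proof.
  induction l as [|x l IH]; simpl; intros Hl.
  - unfold is_series. apply filterlim_ext with (fun _ => 0); [|apply filterlim_const].
    intros n; symmetry; exact (@sum_n_m_const_zero R_AbelianMonoid 0 n).
  - apply is_series_Rplus; auto.
Qed.

Lemma is_series_le (u v : nat -> R) U V :
  (forall k, u k <= v k) -> is_series u U -> is_series v V -> U <= V.
Proof.
  intros Huv Hu Hv.
  apply (is_lim_seq_le (sum_n u) (sum_n v) U V); auto.
  intros n; apply sum_n_m_le; auto.
Qed.

Lemma sum_n_le_is_series (u : nat -> R) U :
  (forall k, 0 <= u k) -> is_series u U -> forall n, sum_n u n <= U.
Proof.
  intros Hu HU n.
  apply (is_lim_seq_le_loc (fun _ => sum_n u n) (sum_n u) (sum_n u n) U);
    [|apply is_lim_seq_const|exact HU].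
  exists n; intros m Hm; induction Hm as [|m Hm IH]; [lra|].
  rewrite sum_Sn; specialize (Hu (S m)); unfold plus; simpl; lra.
Qed.

Lemma is_series_nonneg_zero (u : nat -> R) :
  (forall k, 0 <= u k) -> is_series u 0 -> forall k, u k = 0.
Proof.
  intros Hu Hsum0 k. apply Rle_antisym; [|apply Hu].
  apply Rle_trans with (sum_n u k); [|exact (sum_n_le_is_series u 0 Hu Hsum0 k)].
  destruct k; [rewrite sum_O; lra|].
  rewrite sum_Sn. unfold plus; simpl.
  enough (0 <= sum_n u k) by lra.
  pose proof (sum_n_m_le (fun _ => 0) u 0 k Hu) as Hs.
  rewrite (@sum_n_m_const_zero R_AbelianMonoid) in Hs; exact Hs.
Qed.

Lemma series_nonneg_ge0 (W : nat -> R) L : (forall k, 0 <= W k) -> is_series W L -> 0 <= L.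
Proof.
  intros HW HL. apply Rle_trans with (sum_n W 0); [rewrite sum_O; apply HW|].
  apply sum_n_le_is_series; auto.
Qed.

Definition tail_seq (W : nat -> R) (M : nat) (k : nat) : R := if (k <? M)%nat then 0 else W k.

Lemma is_series_tail (W : nat -> R) L M : (0 < M)%nat -> is_series W L ->
  is_series (tail_seq W M) (L - sum_n W (pred M)).
Proof.
  intros HM HW.
  assert (Hhead : sum_n (tail_seq W M) (pred M) = 0).
  { transitivity (@sum_n_m R_AbelianMonoid (fun _ => 0) 0 (pred M));
      [|exact (@sum_n_m_const_zero R_AbelianMonoid 0 (pred M))].
    apply sum_n_m_ext_loc; intros k Hk.
    unfold tail_seq; rewrite (proj2 (Nat.ltb_lt k M)) by lia; reflexivity. }
  apply (is_series_decr_n _ M); auto.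
  change (@sum_n (NormedModule.AbelianMonoid R_AbsRing R_NormedModule))
    with (@sum_n R_AbelianMonoid).
  rewrite Hhead. unfold plus, opp; simpl. rewrite Ropp_0, Rplus_0_r.
  apply is_series_ext with (fun k => W (M + k)%nat).
  { intros k; unfold tail_seq; rewrite (proj2 (Nat.ltb_ge (M + k) M)) by lia; reflexivity. }
  apply is_series_incr_n; auto.
  unfold plus; simpl; unfold Rminus. rewrite Rplus_assoc, Rplus_opp_l, Rplus_0_r.
  exact HW.
Qed.

Lemma tail_eventually_small (W : nat -> R) L : is_series W L ->
  forall e, 0 < e -> exists M0, forall M, (M0 <= M)%nat ->
    exists T, is_series (tail_seq W M) T /\ T < e.
Proof.
  intros HW e He.
  destruct (HW (fun x => Rabs (x - L) < e)) as [N HN].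
  { exists (mkposreal e He); intros y Hy; apply Hy. }
  exists (S N); intros M HM.
  exists (L - sum_n W (pred M)); split; [apply is_series_tail; auto; lia|].
  specialize (HN (pred M) ltac:(lia)). apply Rabs_def2 in HN.
  change (@sum_n (NormedModule.AbelianMonoid R_AbsRing R_NormedModule))
    with (@sum_n R_AbelianMonoid) in HN.
  lra.
Qed.

Lemma eventually_forall_le (P : nat -> nat -> Prop) K :
  (forall i, (i <= K)%nat -> eventually (P i)) ->
  eventually (fun N => forall i, (i <= K)%nat -> P i N).
Proof.
  induction K as [|K IH]; intros HP.
  - apply (filter_imp (P 0%nat)); [|apply HP; lia].
    intros N HN i Hi; replace i with 0%nat by lia; exact HN.
  - apply (filter_imp (fun N => (forall i, (i <= K)%nat -> P i N) /\ P (S K) N)).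
    + intros N [HN HS] i Hi. destruct (Nat.eq_dec i (S K)) as [->|]; auto.
      apply HN; lia.
    + apply filter_and; [apply IH; intros; apply HP; lia|apply HP; lia].
Qed.

Lemma eventually_inv_INR_lt e : 0 < e -> eventually (fun n => / (INR n + 1) < e).
Proof.
  intros He. destruct (archimed (/ e)) as [Hup _].
  exists (Z.to_nat (up (/ e))); intros n Hn.
  assert (Hpos : 0 < / e) by (apply Rinv_0_lt_compat; exact He).
  assert (Hn' : / e < INR n + 1).
  { apply le_INR in Hn. rewrite INR_IZR_INZ, Z2Nat.id in Hn; [lra|].
    apply le_IZR; lra. }
  rewrite <- (Rinv_inv e). apply Rinv_lt_contravar; [nra|exact Hn'].
Qed.

Lemma le_of_le_plus_mult_eps x y K : 0 <= K ->
  (forall eps, 0 < eps -> x <= y + K * eps) -> x <= y.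
Proof.
  intros HK Hxy. apply Rle_plus_epsilon; intros eps Heps.
  specialize (Hxy (eps / (K + 1)) ltac:(apply Rdiv_lt_0_compat; lra)).
  assert (K * (eps / (K + 1)) <= eps).
  { unfold Rdiv. rewrite <- Rmult_assoc. apply Rmult_le_reg_r with (K + 1); [lra|].
    rewrite Rmult_assoc, Rinv_l by lra. nra. }
  lra.
Qed.

Lemma quadratic_nonneg_discr A B Q : 0 <= Q ->
  (forall l, 0 <= A + 2 * l * B + l * l * Q) -> B * B <= A * Q.
Proof.
  intros HQ0 Hq. pose proof (Hq 0) as HA.
  destruct (Req_dec Q 0) as [HQ|HQ].
  - subst Q. destruct (Req_dec B 0) as [->|HB]; [lra|].
    specialize (Hq (- (A + 1) / (2 * B))).
    replace (2 * (- (A + 1) / (2 * B)) * B) with (- (A + 1)) in Hq by (field; auto). lra.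
  - specialize (Hq (- B / Q)).
    replace (A + 2 * (- B / Q) * B + - B / Q * (- B / Q) * Q) with (A - B * B / Q) in Hq
      by (field; auto).
    apply Rmult_le_compat_r with (r := Q) in Hq; [|lra].
    replace ((A - B * B / Q) * Q) with (A * Q - B * B) in Hq by (field; auto). lra.
Qed.

Lemma linear_le_quadratic_zero r Q : (forall l, 2 * l * r <= l * l * Q) -> r = 0.
Proof.
  intros Hq. set (K := Rabs Q + 1).
  assert (HK : 0 < K) by (unfold K; pose proof (Rabs_pos Q); lra).
  specialize (Hq (r / K)).
  assert (HQ : r / K * (r / K) * Q <= r / K * (r / K) * (K - 1)).
  { apply Rmult_le_compat_l; [nra|]. unfold K; pose proof (Rle_abs Q); lra. }
  replace (2 * (r / K) * r) with (2 * (r * r / K)) in Hq by (field; lra).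
  replace (r / K * (r / K) * (K - 1)) with (r * r / K - r * r / (K * K)) in HQ by (field; lra).
  assert (0 <= r * r / (K * K)) by (apply Rdiv_le_0_compat; nra).
  assert (r * r / K <= 0) by lra.
  assert (r * r <= 0) by (apply Rmult_le_reg_r with (/ K); [apply Rinv_0_lt_compat; lra|]; lra).
  nra.
Qed.

Lemma sqrt_lt_of_lt_sqr x e : 0 <= x -> 0 < e -> x < e * e -> sqrt x < e.
Proof. intros; rewrite <- (sqrt_square e) by lra; apply sqrt_lt_1_alt; lra. Qed.

(** * Hilbert function spaces *)

Section HilbertFunctionSpaceTheory.
Context {T : Type} (H : (T -> C) -> Prop) (ip : (T -> C) -> (T -> C) -> C).
Hypothesis HF : HilbertFunctionSpace H ip.

Definition rip (f g : T -> C) : R := Re (ip f g).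
Definition nrm2 (f : T -> C) : R := Re (ip f f).

Lemma hnorm_nrm2 f : hnorm ip f = sqrt (nrm2 f).
Proof. reflexivity. Qed.

Lemma H_sub f g : H f -> H g -> H (fsub f g).
Proof.
  intros Hf Hg. replace (fsub f g) with (fadd (fscale (RtoC (-1)) g) f).
  - apply (hfs_add _ _ HF); [apply (hfs_scale _ _ HF)|]; assumption.
  - apply functional_extensionality; intros s; unfold fadd, fscale, fsub, Cminus; ring.
Qed.

Lemma ip_add_scale_l c f g h : H f -> H g -> H h ->
  ip (fadd (fscale c f) g) h = (c * ip f h + ip g h)%C.
Proof. apply (hfs_lin _ _ HF). Qed.

Lemma ip_zero_l h : H h -> ip fzero h = 0%C.
Proof.
  intros Hh. pose proof (hfs_zero _ _ HF) as Hzero.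
  pose proof (ip_add_scale_l 1%C fzero fzero h Hzero Hzero Hh) as E.
  replace (fadd (fscale 1%C fzero) fzero) with (@fzero T) in E
    by (apply functional_extensionality; intros; unfold fadd, fscale, fzero; ring).
  destruct (ip fzero h) as [x y]; unfold Cplus, Cmult in E; simpl in E.
  injection E; intros; apply C_ext; simpl; lra.
Qed.

Lemma ip_scale_l c f h : H f -> H h -> ip (fscale c f) h = (c * ip f h)%C.
Proof.
  intros Hf Hh. pose proof (hfs_zero _ _ HF) as Hzero.
  rewrite <- (Cplus_0_r (c * ip f h)), <- (ip_zero_l h Hh), <- ip_add_scale_l; auto.
  f_equal; apply functional_extensionality; intros; unfold fadd, fscale, fzero; ring.
Qed.

Lemma ip_add_l f g h : H f -> H g -> H h -> ip (fadd f g) h = (ip f h + ip g h)%C.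
Proof.
  intros Hf Hg Hh. rewrite <- (Cmult_1_l (ip f h)), <- ip_add_scale_l; auto.
  f_equal; apply functional_extensionality; intros; unfold fadd, fscale; ring.
Qed.

Lemma ip_sym f g : H f -> H g -> ip g f = Cconj (ip f g).
Proof. apply (hfs_sym _ _ HF). Qed.

Lemma rip_sym f g : H f -> H g -> rip g f = rip f g.
Proof. intros; unfold rip; rewrite ip_sym; auto. Qed.

Lemma rip_add_l f g h : H f -> H g -> H h -> rip (fadd f g) h = rip f h + rip g h.
Proof. intros; unfold rip; rewrite ip_add_l; auto. Qed.

Lemma rip_scale_l (r : R) f h : H f -> H h -> rip (fscale (RtoC r) f) h = r * rip f h.
Proof. intros; unfold rip; rewrite ip_scale_l; auto; destruct (ip f h); simpl; ring. Qed.

Lemma rip_add_r f g h : H f -> H g -> H h -> rip h (fadd f g) = rip h f + rip h g.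
Proof.
  intros Hf Hg Hh. pose proof (hfs_add _ _ HF f g Hf Hg).
  rewrite rip_sym, rip_add_l, (rip_sym h f), (rip_sym h g); auto.
Qed.

Lemma rip_scale_r (r : R) f h : H f -> H h -> rip h (fscale (RtoC r) f) = r * rip h f.
Proof.
  intros Hf Hh. pose proof (hfs_scale _ _ HF (RtoC r) f Hf).
  rewrite rip_sym, rip_scale_l, (rip_sym h f); auto.
Qed.

Lemma nrm2_nonneg f : H f -> 0 <= nrm2 f.
Proof. intros Hf; apply (hfs_pos _ _ HF f Hf). Qed.

Lemma nrm2_add_scale f g (l : R) : H f -> H g ->
  nrm2 (fadd f (fscale (RtoC l) g)) = nrm2 f + 2 * l * rip f g + l * l * nrm2 g.
Proof.
  intros Hf Hg. pose proof (hfs_scale _ _ HF (RtoC l) g Hg) as Hlg.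
  pose proof (hfs_add _ _ HF _ _ Hf Hlg).
  change (nrm2 (fadd f (fscale (RtoC l) g)))
    with (rip (fadd f (fscale (RtoC l) g)) (fadd f (fscale (RtoC l) g))).
  rewrite rip_add_l, !rip_add_r, !rip_scale_r, !rip_scale_l, (rip_sym f g); auto.
  unfold nrm2, rip; ring.
Qed.

Lemma nrm2_scale (r : R) f : H f -> nrm2 (fscale (RtoC r) f) = r * r * nrm2 f.
Proof.
  intros Hf. pose proof (hfs_scale _ _ HF (RtoC r) f Hf).
  unfold nrm2. fold (rip (fscale (RtoC r) f) (fscale (RtoC r) f)).
  rewrite rip_scale_l, rip_scale_r; auto. unfold rip; ring.
Qed.

Lemma hnorm_scale c f : H f -> hnorm ip (fscale c f) = Cmod c * hnorm ip f.
Proof.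
  intros Hf. pose proof (hfs_scale _ _ HF c f Hf) as Hcf.
  rewrite !hnorm_nrm2, <- (sqrt_pow2 (Cmod c)) by apply Cmod_ge_0.
  rewrite <- sqrt_mult by (apply pow2_ge_0 || apply nrm2_nonneg; auto). f_equal.
  unfold nrm2. rewrite ip_scale_l, ip_sym, ip_scale_l, Cmult_conj, Cmult_assoc by auto.
  rewrite <- Cmod2_conj. destruct (ip f f); simpl; ring.
Qed.

Lemma nrm2_sub_comm f g : H f -> H g -> nrm2 (fsub f g) = nrm2 (fsub g f).
Proof.
  intros Hf Hg. replace (fsub f g) with (fscale (RtoC (-1)) (fsub g f)).
  - rewrite nrm2_scale by (apply H_sub; auto). ring.
  - apply functional_extensionality; intros s; unfold fsub, fscale, Cminus; ring.
Qed.

Lemma hnorm_sub_comm f g : H f -> H g -> hnorm ip (fsub f g) = hnorm ip (fsub g f).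
Proof. intros; rewrite !hnorm_nrm2, nrm2_sub_comm; auto. Qed.

Lemma rip_sqr_le f g : H f -> H g -> rip f g * rip f g <= nrm2 f * nrm2 g.
Proof.
  intros Hf Hg. apply quadratic_nonneg_discr; [apply nrm2_nonneg; auto|].
  intros l; rewrite <- nrm2_add_scale; auto.
  apply nrm2_nonneg, (hfs_add _ _ HF); [|apply (hfs_scale _ _ HF)]; auto.
Qed.

Lemma Rabs_rip_le f g : H f -> H g -> Rabs (rip f g) <= hnorm ip f * hnorm ip g.
Proof.
  intros Hf Hg. rewrite !hnorm_nrm2, <- sqrt_mult by (apply nrm2_nonneg; auto).
  rewrite <- sqrt_Rsqr_abs. apply sqrt_le_1_alt. apply rip_sqr_le; auto.
Qed.

Lemma ip_eq0_of_rip_scale h g : H h -> H g ->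
  (forall c, rip h (fscale c g) = 0) -> ip h g = 0%C.
Proof.
  intros Hh Hg Hc. pose proof (Hc 1%C) as Hone. pose proof (Hc Ci) as Hi.
  unfold rip in Hone, Hi.
  rewrite ip_sym, ip_scale_l, ip_sym in Hone, Hi by (auto; apply (hfs_scale _ _ HF); auto).
  rewrite Cmult_conj in Hone, Hi.
  apply C_ext; destruct (ip h g) as [x y]; simpl in *; lra.
Qed.

Section Density.
Variable S : (T -> C) -> Prop.
Hypothesis S_sub : forall g, S g -> H g.
Hypothesis S_zero : S fzero.
Hypothesis S_add : forall g1 g2, S g1 -> S g2 -> S (fadd g1 g2).
Hypothesis S_scale : forall (r : R) g, S g -> S (fscale (RtoC r) g).

Lemma rip_eq0_of_approx h x : H h -> H x -> (forall g, S g -> rip h g = 0) ->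
  (forall e, 0 < e -> exists g, S g /\ hnorm ip (fsub x g) < e) -> rip h x = 0.
Proof.
  intros Hh Hx Horth Happ.
  enough (Rabs (rip h x) <= 0) by (pose proof (Rabs_pos (rip h x)); apply Rabs_eq_0; lra).
  apply (le_of_le_plus_mult_eps _ _ (hnorm ip h)); [apply sqrt_pos|].
  intros e He. destruct (Happ e He) as [g [Hg Hxg]].
  replace (rip h x) with (rip h (fsub x g)).
  - eapply Rle_trans; [apply Rabs_rip_le; auto; apply H_sub; auto|].
    rewrite Rplus_0_l. apply Rmult_le_compat_l; [apply sqrt_pos|lra].
  - replace x with (fadd (fsub x g) g) at 2
      by (apply functional_extensionality; intros; unfold fadd, fsub, Cminus; ring).
    rewrite rip_add_r, (Horth g Hg); auto; [ring|apply H_sub; auto].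
Qed.

Lemma exists_minimizing_sequence f : H f -> exists (q0 : R) (g : nat -> T -> C),
  (forall g', S g' -> q0 <= nrm2 (fsub f g')) /\
  (forall n, S (g n) /\ nrm2 (fsub f (g n)) < q0 + / (INR n + 1)).
Proof.
  intros Hf.
  set (E := fun x => exists g, S g /\ x = - nrm2 (fsub f g)).
  assert (Hb : bound E).
  { exists 0; intros x [g [Hg ->]].
    enough (0 <= nrm2 (fsub f g)) by lra. apply nrm2_nonneg, H_sub; auto. }
  destruct (completeness E Hb (ex_intro _ _ (ex_intro _ fzero (conj S_zero eq_refl))))
    as [m [Hub Hlub]].
  assert (Happ : forall n, exists g, S g /\ nrm2 (fsub f g) < - m + / (INR n + 1)).
  { intros n. pose proof (RinvN_pos n) as Hpos. apply NNPP; intros Hn.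
    enough (m <= m - / (INR n + 1)) by lra.
    apply Hlub; intros x [g [Hg ->]].
    destruct (Rlt_dec (nrm2 (fsub f g)) (- m + / (INR n + 1))); [|lra].
    exfalso; apply Hn; exists g; auto. }
  destruct (functional_choice _ Happ) as [g Hg].
  exists (- m), g; split; auto.
  intros g' Hg'. enough (- nrm2 (fsub f g') <= m) by lra. apply Hub; exists g'; auto.
Qed.

(* The limit of a minimizing sequence for the distance from [f] to [S] is its projection. *)
Section Minimizing.
Variables (f : T -> C) (q0 : R) (g : nat -> T -> C).
Hypothesis Hf : H f.
Hypothesis q0_lb : forall g', S g' -> q0 <= nrm2 (fsub f g').
Hypothesis g_min : forall n, S (g n) /\ nrm2 (fsub f (g n)) < q0 + / (INR n + 1).

Lemma minimizing_nrm2_sub_le n k :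
  nrm2 (fsub (g k) (g n)) <= 2 * / (INR n + 1) + 2 * / (INR k + 1).
Proof.
  destruct (g_min n) as [Sn Hn], (g_min k) as [Sk Hk].
  set (x := fsub f (g n)); set (y := fsub f (g k)).
  assert (Hx : H x) by (apply H_sub; auto).
  assert (Hy : H y) by (apply H_sub; auto).
  set (mid := fadd (fscale (RtoC (/ 2)) (g n)) (fscale (RtoC (/ 2)) (g k))).
  assert (Hmid : q0 <= nrm2 (fsub f mid)) by (apply q0_lb, S_add; apply S_scale; auto).
  assert (Eplus : fadd x (fscale (RtoC 1) y) = fscale (RtoC 2) (fsub f mid)).
  { apply functional_extensionality; intros s.
    unfold x, y, mid, fadd, fscale, fsub, Cminus; apply C_ext; simpl; field. }
  assert (Eminus : fadd x (fscale (RtoC (-1)) y) = fsub (g k) (g n)).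
  { apply functional_extensionality; intros s; unfold x, y, fadd, fscale, fsub, Cminus; ring. }
  pose proof (nrm2_add_scale x y 1 Hx Hy) as E1.
  pose proof (nrm2_add_scale x y (-1) Hx Hy) as E2.
  rewrite Eplus, nrm2_scale in E1 by (apply H_sub; auto; apply S_sub, S_add; apply S_scale; auto).
  rewrite Eminus in E2. unfold x, y in E1, E2. lra.
Qed.

Lemma minimizing_cauchy : forall e, 0 < e -> exists N, forall m n, (N <= m)%nat -> (N <= n)%nat ->
  hnorm ip (fsub (g m) (g n)) < e.
Proof.
  intros e He.
  destruct (eventually_inv_INR_lt (e * e / 4) ltac:(nra)) as [N HN].
  exists N; intros m n Hm Hn.
  apply sqrt_lt_of_lt_sqr; auto.
  - apply nrm2_nonneg, H_sub; apply S_sub, g_min.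
  - eapply Rle_lt_trans; [apply minimizing_nrm2_sub_le|].
    pose proof (HN n Hn); pose proof (HN m Hm). lra.
Qed.

Lemma minimizing_limit_orthogonal glim : H glim ->
  (forall e, 0 < e -> exists N, forall n, (N <= n)%nat -> hnorm ip (fsub (g n) glim) < e) ->
  forall G, S G -> rip (fsub f glim) G = 0.
Proof.
  intros Hglim Hlim G HSG. pose proof (S_sub G HSG) as HG.
  apply (linear_le_quadratic_zero _ (nrm2 G)); intros l.
  apply (le_of_le_plus_mult_eps _ _ (1 + 2 * Rabs l * hnorm ip G)).
  { pose proof (Rabs_pos l); pose proof (sqrt_pos (nrm2 G)); rewrite hnorm_nrm2; nra. }
  intros eps Heps.
  destruct (eventually_inv_INR_lt eps Heps) as [N1 HN1].
  destruct (Hlim eps Heps) as [N2 HN2].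
  set (n := max N1 N2).
  specialize (HN1 n (Nat.le_max_l _ _)); specialize (HN2 n (Nat.le_max_r _ _)).
  destruct (g_min n) as [Sn Hn]. pose proof (S_sub _ Sn) as Hgn.
  assert (Hlb : q0 <= nrm2 (fsub f (fadd (g n) (fscale (RtoC l) G))))
    by (apply q0_lb, S_add, S_scale; auto).
  replace (fsub f (fadd (g n) (fscale (RtoC l) G)))
    with (fadd (fsub f (g n)) (fscale (RtoC (- l)) G)) in Hlb
    by (apply functional_extensionality; intros; unfold fadd, fscale, fsub, Cminus;
        apply C_ext; simpl; ring).
  rewrite nrm2_add_scale in Hlb by (auto; apply H_sub; auto).
  assert (Esplit : rip (fsub f (g n)) G = rip (fsub f glim) G + rip (fsub glim (g n)) G).
  { rewrite <- rip_add_l by (auto; apply H_sub; auto). f_equal.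
    apply functional_extensionality; intros; unfold fadd, fsub, Cminus; ring. }
  rewrite Esplit in Hlb.
  pose proof (Rabs_rip_le (fsub glim (g n)) G ltac:(apply H_sub; auto) HG) as Hcs.
  rewrite hnorm_sub_comm in Hcs by auto.
  assert (Hprod : Rabs (rip (fsub glim (g n)) G) <= eps * hnorm ip G).
  { eapply Rle_trans; [exact Hcs|]. apply Rmult_le_compat_r; [apply sqrt_pos|lra]. }
  assert (Hb : Rabs (2 * l * rip (fsub glim (g n)) G) <= 2 * Rabs l * (eps * hnorm ip G)).
  { rewrite !Rabs_mult, (Rabs_right 2) by lra.
    apply Rmult_le_compat_l; [pose proof (Rabs_pos l); lra|exact Hprod]. }
  pose proof (Rle_abs (- (2 * l * rip (fsub glim (g n)) G))) as Hneg.
  rewrite Rabs_Ropp in Hneg.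
  nra.
Qed.

End Minimizing.

Theorem dense_of_orthogonal_trivial :
  (forall h, H h -> (forall g, S g -> rip h g = 0) -> forall s, h s = 0%C) ->
  forall f, H f -> forall e, 0 < e -> exists g, S g /\ hnorm ip (fsub f g) < e.
Proof.
  intros Htriv f Hf e He.
  destruct (exists_minimizing_sequence f Hf) as [q0 [g [Hlb Hmin]]].
  destruct (hfs_complete _ _ HF g (fun n => S_sub _ (proj1 (Hmin n)))
              (minimizing_cauchy f q0 g Hf Hlb Hmin)) as [glim [Hglim Hlim]].
  assert (Efg : f = glim).
  { apply functional_extensionality; intros s.
    pose proof (Htriv (fsub f glim) (H_sub _ _ Hf Hglim)
                  (minimizing_limit_orthogonal f q0 g Hf Hlb Hmin glim Hglim Hlim) s) as Hs.
    unfold fsub in Hs. replace (f s) with (f s - glim s + glim s)%C by ring.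
    rewrite Hs; ring. }
  destruct (Hlim e He) as [N HN]. exists (g N); split; [apply Hmin|].
  rewrite hnorm_sub_comm, Efg; [apply HN; lia|auto|apply S_sub, Hmin].
Qed.

End Density.

End HilbertFunctionSpaceTheory.

(** * Norms of kernel combinations *)

Lemma Cconj_kterm a s u k : Cconj (kterm a s u k) =
  (RtoC (a (S k)) * npow_neg (S k) (Cconj s) * Cconj (npow_neg (S k) (Cconj u)))%C.
Proof.
  unfold kterm. rewrite npow_neg_add, Cmult_conj, Cmult_conj, !npow_neg_conj.
  replace (Cconj (RtoC (a (S k)))) with (RtoC (a (S k))) by ceq.
  rewrite <- npow_neg_conj, Cconj_conj. ring.
Qed.

Lemma is_series_kappa rho a s u : kernel_convergent rho a -> rho < Re s -> rho < Re u ->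
  is_series (fun k => Re (kterm a s u k)) (Re (kappa a s u)) /\
  is_series (fun k => Im (kterm a s u k)) (Im (kappa a s u)).
Proof.
  intros Hc Hs Hu. destruct (Hc s u Hs Hu) as [l Hl]. unfold kappa; simpl.
  split; apply Series_correct; eexists; [apply (is_series_Re _ _ Hl)|apply (is_series_Im _ _ Hl)].
Qed.

Lemma is_series_Re_mult_conj_kterm rho a s u (w : C) :
  kernel_convergent rho a -> rho < Re s -> rho < Re u ->
  is_series (fun k => Re (w * Cconj (kterm a s u k))%C) (Re (w * Cconj (kappa a s u))%C).
Proof.
  intros Hc Hs Hu. destruct (is_series_kappa rho a s u Hc Hs Hu) as [HRe HIm].
  assert (E : forall z : C, Re (w * Cconj z)%C = Re w * Re z + Im w * Im z)
    by (intros [x y]; destruct w; simpl; ring).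
  rewrite E.
  apply is_series_ext with (fun k => Re w * Re (kterm a s u k) + Im w * Im (kterm a s u k)).
  { intros k; rewrite E; reflexivity. }
  apply is_series_Rplus; apply is_series_Rmult_l; assumption.
Qed.

Section KernelCombinations.
Variables (rho : R) (a : nat -> R).
Hypothesis Hconv : kernel_convergent rho a.
Variable H : (Hrho rho -> C) -> Prop.
Variable ip : (Hrho rho -> C) -> (Hrho rho -> C) -> C.
Hypothesis HH : is_RKHS rho a H ip.

Definition kcomb (l : list (C * C)) : Hrho rho -> C :=
  fold_right (fun p acc => fadd (fscale (fst p) (kfun rho a (snd p))) acc) fzero l.

Definition in_half_plane (l : list (C * C)) : Prop := forall p, In p l -> rho < Re (snd p).

(* [kcomb l s = sum_n a_n n^(-s) kcomb_coef l (n - 1)]: the index is shifted since [n = S k]. *)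
Definition kcomb_coef (l : list (C * C)) (k : nat) : C :=
  csum (fun p => fst p * npow_neg (S k) (Cconj (snd p)))%C l.

Lemma rkhs_hilbert : HilbertFunctionSpace H ip.
Proof. apply HH. Qed.

Lemma kcomb_val l s : kcomb l s = csum (fun p => fst p * kappa a (proj1_sig s) (snd p))%C l.
Proof. induction l; simpl; auto. unfold fadd, fscale, kfun. rewrite <- IHl. reflexivity. Qed.

Lemma kcomb_app l1 l2 : kcomb (l1 ++ l2) = fadd (kcomb l1) (kcomb l2).
Proof.
  apply functional_extensionality; intros s; unfold fadd.
  rewrite !kcomb_val, csum_app; reflexivity.
Qed.

Lemma kfun_in_H u : rho < Re u -> H (kfun rho a u).
Proof. intros Hu. destruct HH as [_ [Hk _]]. apply (Hk (exist _ u Hu)). Qed.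

Lemma kcomb_in_H l : in_half_plane l -> H (kcomb l).
Proof.
  induction l as [|p l IH]; simpl; intros Hl; [apply (hfs_zero _ _ rkhs_hilbert)|].
  apply (hfs_add _ _ rkhs_hilbert).
  - apply (hfs_scale _ _ rkhs_hilbert), kfun_in_H, Hl; simpl; auto.
  - apply IH; intros q Hq; apply Hl; simpl; auto.
Qed.

Lemma ip_kfun_l g u (Hu : rho < Re u) : H g -> ip (kfun rho a u) g = Cconj (g (exist _ u Hu)).
Proof.
  intros Hg. destruct HH as [_ [_ Hrep]].
  pose proof (Hrep g (exist _ u Hu) Hg) as E; simpl in E.
  rewrite (ip_sym _ _ rkhs_hilbert g (kfun rho a u) Hg (kfun_in_H u Hu)), E. reflexivity.
Qed.

Lemma ip_kcomb_l l g : in_half_plane l -> H g ->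
  ip (kcomb l) g = csum (fun p => fst p * ip (kfun rho a (snd p)) g)%C l.
Proof.
  induction l as [|p l IH]; simpl; intros Hl Hg; [apply (ip_zero_l _ _ rkhs_hilbert); auto|].
  assert (Hl' : in_half_plane l) by (intros q Hq; apply Hl; simpl; auto).
  rewrite (ip_add_scale_l _ _ rkhs_hilbert), IH; auto.
  - apply kfun_in_H, Hl; simpl; auto.
  - apply kcomb_in_H; auto.
Qed.

Lemma kcomb_coef_sqr l k :
  csum (fun p => csum (fun q => fst p * Cconj (fst q) * Cconj (kterm a (snd p) (snd q) k)) l)%C l
  = (RtoC (a (S k)) * RtoC (Cmod (kcomb_coef l k) ^ 2))%C.
Proof.
  rewrite Cmod2_conj. unfold kcomb_coef. rewrite csum_conj.
  rewrite Cmult_assoc, (Cmult_comm (RtoC _)), <- Cmult_assoc, csum_mult_r.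
  apply csum_ext; intros p _. rewrite Cmult_assoc, csum_mult_l.
  apply csum_ext; intros q _. rewrite Cconj_kterm, Cmult_conj. ring.
Qed.

Theorem nrm2_kcomb l : in_half_plane l ->
  is_series (fun k => a (S k) * Cmod (kcomb_coef l k) ^ 2) (nrm2 ip (kcomb l)).
Proof.
  intros Hl. pose proof (kcomb_in_H l Hl) as Hk.
  unfold nrm2. rewrite ip_kcomb_l, Re_csum by auto.
  apply is_series_ext with
    (fun k => rsum (fun p => Re (csum (fun q =>
       fst p * Cconj (fst q) * Cconj (kterm a (snd p) (snd q) k)) l))%C l).
  { intros k. rewrite <- Re_csum, kcomb_coef_sqr. simpl; ring. }
  apply is_series_rsum; intros p Hp.
  rewrite (ip_kfun_l _ _ (Hl p Hp) Hk), kcomb_val, csum_conj, csum_mult_l, Re_csum.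
  apply is_series_ext with
    (fun k => rsum (fun q => Re (fst p * Cconj (fst q) * Cconj (kterm a (snd p) (snd q) k)))%C l).
  { intros k; rewrite Re_csum; reflexivity. }
  apply is_series_rsum; intros q Hq. cbn [proj1_sig].
  replace (fst p * Cconj (fst q * kappa a (snd p) (snd q)))%C
    with (fst p * Cconj (fst q) * Cconj (kappa a (snd p) (snd q)))%C
    by (rewrite Cmult_conj; ring).
  apply (is_series_Re_mult_conj_kterm rho); auto.
Qed.

End KernelCombinations.

(** * Averaging along a vertical line *)

Definition cis_sum (th : R) (N : nat) : C := csum (fun j => cis (INR j * th)) (seq 0 N).

Definition cis_avg (th : R) (N : nat) : C := (RtoC (/ INR N) * cis_sum th N)%C.

Lemma cis_sum_S th N : cis_sum th (S N) = (cis_sum th N + cis (INR N * th))%C.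
Proof. unfold cis_sum. rewrite seq_S, csum_app; simpl; ring. Qed.

Lemma cis_sum_0 N : cis_sum 0 N = RtoC (INR N).
Proof.
  induction N; [reflexivity|].
  rewrite cis_sum_S, IHN, Rmult_0_r, cis_0, S_INR. ceq.
Qed.

Lemma Cmod_cis_sum_le th N : Cmod (cis_sum th N) <= INR N.
Proof.
  induction N; [unfold cis_sum; simpl; rewrite Cmod_0; lra|].
  rewrite cis_sum_S, S_INR. eapply Rle_trans; [apply Cmod_triangle|]. rewrite Cmod_cis. lra.
Qed.

Lemma cis_sum_telescope th N : ((1 - cis th) * cis_sum th N)%C = (1 - cis (INR N * th))%C.
Proof.
  induction N.
  - unfold cis_sum; simpl. rewrite Rmult_0_l, cis_0. ring.
  - rewrite cis_sum_S, S_INR, Rmult_plus_distr_r, Rmult_1_l, cis_add.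
    rewrite Cmult_plus_distr_l, IHN. ring.
Qed.

Lemma Cmod_cis_sum_le_inv th N : cis th <> 1%C -> Cmod (cis_sum th N) <= 2 / Cmod (1 - cis th)%C.
Proof.
  intros Hth. assert (Hpos : 0 < Cmod (1 - cis th)%C).
  { apply Cmod_gt_0; intros E; apply Hth. replace (cis th) with (1 - (1 - cis th))%C by ring.
    rewrite E; ring. }
  apply Rmult_le_reg_l with (Cmod (1 - cis th)%C); auto.
  rewrite <- Cmod_mult, cis_sum_telescope. replace (Cmod (1 - cis th)%C * (2 / Cmod (1 - cis th)%C))
    with 2 by (field; lra).
  unfold Cminus; eapply Rle_trans; [apply Cmod_triangle|].
  rewrite Cmod_opp, Cmod_cis, Cmod_1; lra.
Qed.

Lemma Cmod_cis_avg_le_1 th N : (1 <= N)%nat -> Cmod (cis_avg th N) <= 1.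
Proof.
  intros HN. assert (0 < INR N) by (apply lt_0_INR; lia).
  unfold cis_avg. rewrite Cmod_mult, Cmod_R, Rabs_right by (left; apply Rinv_0_lt_compat; lra).
  apply Rmult_le_reg_l with (INR N); auto. rewrite <- Rmult_assoc, Rinv_r, Rmult_1_r by lra.
  rewrite Rmult_1_l; apply Cmod_cis_sum_le.
Qed.

Lemma cis_avg_eventually_small th eta : cis th <> 1%C -> 0 < eta ->
  eventually (fun N => Cmod (cis_avg th N) <= eta).
Proof.
  intros Hth Heta. set (D := Cmod (1 - cis th)%C).
  assert (HD : 0 < D).
  { apply Cmod_gt_0; intros E; apply Hth. replace (cis th) with (1 - (1 - cis th))%C by ring.
    rewrite E; ring. }
  destruct (eventually_inv_INR_lt (eta * D / 2) ltac:(apply Rdiv_lt_0_compat; nra))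
    as [N0 HN0].
  exists (S N0); intros N HN.
  destruct N as [|N]; [lia|]. specialize (HN0 N ltac:(lia)). rewrite <- S_INR in HN0.
  assert (HNpos : 0 < INR (S N)) by (apply lt_0_INR; lia).
  unfold cis_avg. rewrite Cmod_mult, Cmod_R, Rabs_right by (left; apply Rinv_0_lt_compat; lra).
  eapply Rle_trans.
  - apply Rmult_le_compat_l; [left; apply Rinv_0_lt_compat; lra|].
    apply (Cmod_cis_sum_le_inv _ _ Hth).
  - fold D. apply Rle_trans with (eta * D / 2 * (2 / D)); [|right; field; lra].
    apply Rmult_le_compat_r; [apply Rdiv_le_0_compat; lra|lra].
Qed.

Definition phase (dl : R) (n m : nat) : R := dl * (ln (INR n) - ln (INR m)).

Lemma ln_INR_le n m : (1 <= n)%nat -> (n <= m)%nat -> ln (INR n) <= ln (INR m).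
Proof. intros; apply ln_le; [apply lt_0_INR; lia|apply le_INR; auto]. Qed.

(* With this step all phases lie in (-1, 1), where only 0 is a multiple of [2 PI]. *)
Lemma cis_phase_neq_1 Mx n m : (1 <= n <= Mx)%nat -> (1 <= m <= Mx)%nat -> n <> m ->
  cis (phase (/ (ln (INR Mx) + 1)) n m) <> 1%C.
Proof.
  intros Hn Hm Hnm. unfold phase.
  pose proof (ln_INR_le 1 n ltac:(lia) ltac:(lia)) as Ln.
  pose proof (ln_INR_le 1 m ltac:(lia) ltac:(lia)) as Lm.
  pose proof (ln_INR_le n Mx ltac:(lia) ltac:(lia)).
  pose proof (ln_INR_le m Mx ltac:(lia) ltac:(lia)).
  simpl in Ln, Lm; rewrite ln_1 in Ln, Lm.
  assert (Hdl : 0 < / (ln (INR Mx) + 1)) by (apply Rinv_0_lt_compat; lra).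
  apply cis_neq_1.
  - intros E. apply Rmult_integral in E as [E|E]; [lra|].
    apply Hnm, INR_eq, ln_inv; [apply lt_0_INR; lia|apply lt_0_INR; lia|lra].
  - rewrite Rabs_mult, (Rabs_right (/ _)) by lra.
    assert (Rabs (ln (INR n) - ln (INR m)) <= ln (INR Mx)) by (apply Rabs_le; lra).
    assert (/ (ln (INR Mx) + 1) * (ln (INR Mx) + 1) = 1) by (field; lra).
    pose proof PI2_3_2. nra.
Qed.

(* Its [n]-th coefficient carries, for each [m], the average of [(n/m)^(i j dl)] over [j < N],
   which is [1] for [n = m] and small otherwise: it singles out the frequencies [m <= M]. *)
Definition line_approx (alpha : R) (t : C) (dl : R) (M N : nat) : list (C * C) :=
  flat_map (fun m => map (fun j =>
      ((RtoC (/ INR N) * npow_neg m (Cconj t - RtoC alpha) * npow_neg m (0%R, (INR j * dl)%R))%C,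
       (alpha, INR j * dl))) (seq 0 N)) (seq 1 M).

Definition line_term (alpha : R) (t : C) (dl : R) (N n m : nat) : C :=
  (npow_neg m (Cconj t - RtoC alpha) * RtoC (exp (- alpha * ln (INR n)))
   * cis_avg (phase dl n m) N)%C.

Lemma kcomb_coef_line_approx alpha t dl M N k :
  kcomb_coef (line_approx alpha t dl M N) k = csum (line_term alpha t dl N (S k)) (seq 1 M).
Proof.
  unfold kcomb_coef, line_approx. rewrite csum_flat_map. apply csum_ext; intros m _.
  rewrite csum_map. unfold line_term, cis_avg, cis_sum. rewrite !csum_mult_l.
  apply csum_ext; intros j _.
  cbn [fst snd].
  replace (Cconj (alpha, INR j * dl)) with (alpha, - (INR j * dl)) by reflexivity.
  rewrite !npow_neg_cis, Ropp_0, Rmult_0_l, exp_0.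
  replace (INR j * phase dl (S k) m)
    with (- (INR j * dl) * ln (INR m) + - - (INR j * dl) * ln (INR (S k)))
    by (unfold phase; ring).
  rewrite cis_add. ring.
Qed.

Lemma line_term_diag alpha t dl N n : (1 <= N)%nat ->
  line_term alpha t dl N n n = npow_neg n (Cconj t).
Proof.
  intros HN. unfold line_term, cis_avg, phase. rewrite Rminus_diag, Rmult_0_r, cis_sum_0.
  replace (RtoC (/ INR N) * RtoC (INR N))%C with (RtoC 1)
    by (assert (0 < INR N) by (apply lt_0_INR; lia); apply C_ext; simpl; field; lra).
  rewrite <- npow_neg_real, Cmult_1_r, <- npow_neg_add. f_equal.
  destruct t; ceq.
Qed.

Lemma Cmod_line_term_le alpha t dl N n m g : Cmod (cis_avg (phase dl n m) N) <= g ->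
  Cmod (line_term alpha t dl N n m)
  <= exp (- alpha * ln (INR n)) * g * exp (- (Re t - alpha) * ln (INR m)).
Proof.
  intros Hg. unfold line_term. rewrite !Cmod_mult, Cmod_npow_neg, Cmod_R.
  rewrite Rabs_right by (left; apply exp_pos).
  replace (Re (Cconj t - RtoC alpha)%C) with (Re t - alpha) by (destruct t; simpl; ring).
  pose proof (exp_pos (- alpha * ln (INR n))). pose proof (exp_pos (- (Re t - alpha) * ln (INR m))).
  replace (exp (- alpha * ln (INR n)) * g * exp (- (Re t - alpha) * ln (INR m)))
    with (exp (- (Re t - alpha) * ln (INR m)) * exp (- alpha * ln (INR n)) * g) by ring.
  apply Rmult_le_compat_l; [apply Rmult_le_pos; lra|exact Hg].
Qed.

Definition freq_weight_sum (alpha : R) (t : C) (M : nat) : R :=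
  rsum (fun m => exp (- (Re t - alpha) * ln (INR m))) (seq 1 M).

Lemma line_approx_err_le alpha t dl M N n g : (1 <= n)%nat -> (1 <= N)%nat -> 0 <= g ->
  (forall m, (1 <= m <= M)%nat -> m <> n -> Cmod (cis_avg (phase dl n m) N) <= g) ->
  Cmod (npow_neg n (Cconj t) - csum (line_term alpha t dl N n) (seq 1 M))%C <=
    (if (n <=? M)%nat then 0 else exp (- Re t * ln (INR n)))
    + exp (- alpha * ln (INR n)) * g * freq_weight_sum alpha t M.
Proof.
  intros Hn HN Hg0 Hg.
  set (rest := csum (fun m => if Nat.eq_dec m n then 0%C else line_term alpha t dl N n m)
                    (seq 1 M)).
  assert (Hrest : Cmod rest <= exp (- alpha * ln (INR n)) * g * freq_weight_sum alpha t M).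
  { unfold rest, freq_weight_sum. eapply Rle_trans; [apply Cmod_csum_le|].
    rewrite <- rsum_mult_l. apply rsum_le; intros m Hm. apply in_seq in Hm.
    destruct (Nat.eq_dec m n) as [->|Hmn].
    - rewrite Cmod_0. pose proof (exp_pos (- alpha * ln (INR n))).
      pose proof (exp_pos (- (Re t - alpha) * ln (INR n))).
      apply Rmult_le_pos; [apply Rmult_le_pos|]; lra.
    - apply Cmod_line_term_le, Hg; [lia|exact Hmn]. }
  destruct (Nat.leb_spec n M) as [HnM|HnM].
  - rewrite (csum_remove_one _ n Nat.eq_dec) by (apply seq_NoDup || (apply in_seq; lia)).
    fold rest. rewrite line_term_diag by exact HN.
    replace (npow_neg n (Cconj t) - (npow_neg n (Cconj t) + rest))%C with (- rest)%C by ring.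
    rewrite Cmod_opp; lra.
  - replace (csum (line_term alpha t dl N n) (seq 1 M)) with rest.
    + unfold Cminus; eapply Rle_trans; [apply Cmod_triangle|].
      rewrite Cmod_opp, Cmod_npow_neg. destruct t; simpl in *; lra.
    + apply csum_ext; intros m Hm; apply in_seq in Hm.
      destruct (Nat.eq_dec m n); [lia|reflexivity].
Qed.

Definition kappa_diag_term (a : nat -> R) (b : R) (k : nat) : R :=
  a (S k) * exp (- b * ln (INR (S k))) ^ 2.

Lemma kappa_diag_term_nonneg a b k : (forall n, (1 <= n)%nat -> 0 <= a n) ->
  0 <= kappa_diag_term a b k.
Proof. intros Ha; apply Rmult_le_pos; [apply Ha; lia|apply pow2_ge_0]. Qed.

Lemma sqr_le_of_le_add E A B : 0 <= E -> 0 <= A -> 0 <= B -> E <= A + B ->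
  E ^ 2 <= 2 * A ^ 2 + 2 * B ^ 2.
Proof.
  intros HE HA HB HEAB. apply Rle_trans with ((A + B) ^ 2); [apply pow_incr; lra|].
  pose proof (pow2_ge_0 (A - B)); nra.
Qed.

Lemma line_approx_sq_err_le a alpha t dl M Mx N eta k :
  (forall n, (1 <= n)%nat -> 0 <= a n) -> (1 <= N)%nat -> 0 <= eta ->
  (forall n m, (1 <= n <= Mx)%nat -> (1 <= m <= M)%nat -> m <> n ->
     Cmod (cis_avg (phase dl n m) N) <= eta) ->
  a (S k) * Cmod (npow_neg (S k) (Cconj t) - kcomb_coef (line_approx alpha t dl M N) k)%C ^ 2
  <= 2 * tail_seq (kappa_diag_term a (Re t)) M k
     + 2 * freq_weight_sum alpha t M ^ 2
       * (eta ^ 2 * kappa_diag_term a alpha k + tail_seq (kappa_diag_term a alpha) Mx k).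
Proof.
  intros Ha HN Heta Havg.
  set (g := if (S k <=? Mx)%nat then eta else 1).
  assert (Hg : 0 <= g) by (unfold g; destruct (S k <=? Mx)%nat; lra).
  pose proof (line_approx_err_le alpha t dl M N (S k) g ltac:(lia) HN Hg) as Herr.
  rewrite <- kcomb_coef_line_approx in Herr.
  set (A := if (S k <=? M)%nat then 0 else exp (- Re t * ln (INR (S k)))) in Herr.
  set (Cw := freq_weight_sum alpha t M) in *.
  set (P := exp (- alpha * ln (INR (S k)))) in *.
  assert (HA : 0 <= A) by (unfold A; destruct (S k <=? M)%nat; [lra|left; apply exp_pos]).
  assert (HCw : 0 <= Cw) by (apply rsum_nonneg; intros; left; apply exp_pos).
  assert (HP : 0 < P) by apply exp_pos.
  assert (Hak : 0 <= a (S k)) by (apply Ha; lia).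
  specialize (Herr ltac:(intros m Hm Hmk; unfold g; destruct (Nat.leb_spec (S k) Mx);
    [apply Havg; lia|apply Cmod_cis_avg_le_1, HN])).
  assert (HB : 0 <= P * g * Cw) by (apply Rmult_le_pos; [apply Rmult_le_pos|]; lra).
  pose proof (sqr_le_of_le_add _ _ _ (Cmod_ge_0 _) HA HB Herr) as HE2.
  assert (HtailA : a (S k) * A ^ 2 = tail_seq (kappa_diag_term a (Re t)) M k).
  { unfold tail_seq, kappa_diag_term, A. change (k <? M)%nat with (S k <=? M)%nat.
    destruct (S k <=? M)%nat; ring. }
  assert (HtailB : a (S k) * (P * g * Cw) ^ 2
                   <= Cw ^ 2 * (eta ^ 2 * kappa_diag_term a alpha k
                                + tail_seq (kappa_diag_term a alpha) Mx k)).
  { unfold tail_seq, kappa_diag_term, g. fold P. change (k <? Mx)%nat with (S k <=? Mx)%nat.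
    destruct (S k <=? Mx)%nat.
    - right; ring.
    - assert (0 <= Cw ^ 2 * (eta ^ 2 * (a (S k) * P ^ 2))).
      { apply Rmult_le_pos; [apply pow2_ge_0|].
        apply Rmult_le_pos; [apply pow2_ge_0|apply Rmult_le_pos; [lra|apply pow2_ge_0]]. }
      nra. }
  apply Rle_trans with (a (S k) * (2 * A ^ 2 + 2 * (P * g * Cw) ^ 2)).
  - apply Rmult_le_compat_l; assumption.
  - nra.
Qed.

Lemma phases_eventually_separated Mx M eta : (M <= Mx)%nat -> 0 < eta ->
  eventually (fun N => (1 <= N)%nat /\ forall n m, (1 <= n <= Mx)%nat -> (1 <= m <= M)%nat ->
    m <> n -> Cmod (cis_avg (phase (/ (ln (INR Mx) + 1)) n m) N) <= eta).
Proof.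
  intros HM Heta.
  set (P := fun n m N => (1 <= n)%nat -> (1 <= m)%nat -> m <> n ->
                         Cmod (cis_avg (phase (/ (ln (INR Mx) + 1)) n m) N) <= eta).
  assert (Hev : eventually (fun N =>
    forall n, (n <= Mx)%nat -> forall m, (m <= Mx)%nat -> P n m N)).
  { apply eventually_forall_le; intros n Hn.
    apply (eventually_forall_le (fun m N => P n m N)); intros m Hm.
    destruct (classic ((1 <= n)%nat /\ (1 <= m)%nat /\ m <> n)) as [[Hn1 [Hm1 Hmn]]|Hno].
    - apply (filter_imp (fun N => Cmod (cis_avg (phase (/ (ln (INR Mx) + 1)) n m) N) <= eta));
        [intros N HN _ _ _; exact HN|].
      apply cis_avg_eventually_small; auto. apply cis_phase_neq_1; auto; lia.
    - apply filter_forall; intros N Hn1 Hm1 Hmn. exfalso; auto. }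
  assert (H1 : eventually (fun N => (1 <= N)%nat)) by (exists 1%nat; auto).
  generalize (filter_and _ _ Hev H1); apply filter_imp; intros N [HN HN1]; split; [exact HN1|].
  intros n m Hn Hm Hmn. apply (HN n ltac:(lia) m ltac:(lia)); lia.
Qed.

Lemma error_budget e Cw Sa T : 0 < e -> 0 <= Sa -> T < e / (Cw ^ 2 + 1) ->
  Cw ^ 2 * (Rmin 1 (e / ((Cw ^ 2 + 1) * (Sa + 1))) ^ 2 * Sa + T) < 2 * e.
Proof.
  intros He HSa HT. set (K := Cw ^ 2 + 1) in *. set (eta := Rmin 1 (e / (K * (Sa + 1)))).
  assert (HK : 0 < K) by (unfold K; pose proof (pow2_ge_0 Cw); lra).
  assert (Heta0 : 0 < eta) by (apply Rmin_pos; [lra|apply Rdiv_lt_0_compat; nra]).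
  assert (Heta1 : eta <= 1) by apply Rmin_l.
  assert (Heta2 : eta <= e / (K * (Sa + 1))) by apply Rmin_r.
  assert (Hsq : eta ^ 2 * Sa <= eta * (Sa + 1)).
  { assert (eta ^ 2 <= eta) by (simpl; nra).
    apply Rle_trans with (eta * Sa); [apply Rmult_le_compat_r|]; lra. }
  assert (HKeta : K * (eta * (Sa + 1)) <= e).
  { apply Rle_trans with (K * (e / (K * (Sa + 1)) * (Sa + 1))).
    - apply Rmult_le_compat_l; [lra|]. apply Rmult_le_compat_r; lra.
    - right; field; lra. }
  assert (HKT : Cw ^ 2 * T < e).
  { apply Rle_lt_trans with (Cw ^ 2 * (e / K)); [apply Rmult_le_compat_l; [apply pow2_ge_0|lra]|].
    replace (Cw ^ 2 * (e / K)) with (e - e / K) by (unfold K in *; field; lra).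
    assert (0 < e / K) by (apply Rdiv_lt_0_compat; lra). lra. }
  pose proof (pow2_ge_0 Cw). assert (0 <= eta ^ 2 * Sa) by (pose proof (pow2_ge_0 eta); nra).
  unfold K in *. nra.
Qed.

Theorem line_approx_err_small a alpha t Sx Sa : (forall n, (1 <= n)%nat -> 0 <= a n) ->
  is_series (kappa_diag_term a (Re t)) Sx -> is_series (kappa_diag_term a alpha) Sa ->
  forall del, 0 < del -> exists dl M N, forall U,
    is_series (fun k => a (S k) *
      Cmod (npow_neg (S k) (Cconj t) - kcomb_coef (line_approx alpha t dl M N) k)%C ^ 2) U ->
    U < del.
Proof.
  intros Ha HSx HSa del Hdel. set (e := del / 6).
  destruct (tail_eventually_small _ _ HSx e ltac:(unfold e; lra)) as [M HM].
  destruct (HM M (le_n _)) as [T1 [HT1 HT1e]].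
  set (Cw := freq_weight_sum alpha t M).
  assert (HK : 0 < Cw ^ 2 + 1) by (pose proof (pow2_ge_0 Cw); lra).
  destruct (tail_eventually_small _ _ HSa (e / (Cw ^ 2 + 1))
              ltac:(unfold e; apply Rdiv_lt_0_compat; lra)) as [M1 HM1].
  set (Mx := max M1 M).
  destruct (HM1 Mx (Nat.le_max_l _ _)) as [T3 [HT3 HT3e]].
  assert (HSa0 : 0 <= Sa)
    by exact (series_nonneg_ge0 _ _ (fun k => kappa_diag_term_nonneg a alpha k Ha) HSa).
  set (eta := Rmin 1 (e / ((Cw ^ 2 + 1) * (Sa + 1)))).
  assert (Heta : 0 < eta) by (apply Rmin_pos; [lra|unfold e; apply Rdiv_lt_0_compat; nra]).
  destruct (phases_eventually_separated Mx M eta (Nat.le_max_r _ _) Heta) as [N HN].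
  destruct (HN N (le_n _)) as [HN1 Hsep].
  exists (/ (ln (INR Mx) + 1)), M, N; intros U HU.
  pose proof (is_series_Rplus _ _ _ _ (is_series_Rmult_l 2 _ _ HT1)
    (is_series_Rmult_l (2 * Cw ^ 2) _ _
      (is_series_Rplus _ _ _ _ (is_series_Rmult_l (eta ^ 2) _ _ HSa) HT3))) as Hbound.
  pose proof (is_series_le _ _ _ _
    (fun k => line_approx_sq_err_le a alpha t _ M Mx N eta k Ha HN1 (Rlt_le _ _ Heta) Hsep)
    HU Hbound) as HUb.
  pose proof (error_budget e Cw Sa T3 ltac:(unfold e; lra) HSa0 HT3e) as Hbudget.
  fold eta in Hbudget. unfold e in *. lra.
Qed.

(** * Totality *)

Definition on_line (alpha : R) (l : list (C * C)) : Prop := forall p, In p l -> Re (snd p) = alpha.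

Definition scale_coefs (c : C) (l : list (C * C)) : list (C * C) :=
  map (fun p => (c * fst p, snd p)%C) l.

Lemma on_line_app alpha l1 l2 : on_line alpha l1 -> on_line alpha l2 -> on_line alpha (l1 ++ l2).
Proof. intros H1 H2 p Hp; apply in_app_or in Hp as [Hp|Hp]; auto. Qed.

Lemma on_line_scale_coefs alpha c l : on_line alpha l -> on_line alpha (scale_coefs c l).
Proof. intros Hl p Hp. apply in_map_iff in Hp as [q [<- Hq]]. apply (Hl q Hq). Qed.

Lemma on_line_line_approx alpha t dl M N : on_line alpha (line_approx alpha t dl M N).
Proof.
  intros p Hp. apply in_flat_map in Hp as [m [_ Hm]].
  apply in_map_iff in Hm as [j [<- _]]. reflexivity.
Qed.

Lemma kcomb_coef_cons c u l k :
  kcomb_coef ((c, u) :: l) k = (c * npow_neg (S k) (Cconj u) + kcomb_coef l k)%C.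
Proof. reflexivity. Qed.

Lemma kcomb_coef_scale_coefs c l k : kcomb_coef (scale_coefs c l) k = (c * kcomb_coef l k)%C.
Proof.
  unfold kcomb_coef, scale_coefs. rewrite csum_map, csum_mult_l.
  apply csum_ext; intros; simpl; ring.
Qed.

Lemma kcomb_scale_coefs rho a c l : kcomb rho a (scale_coefs c l) = fscale c (kcomb rho a l).
Proof.
  apply functional_extensionality; intros s; unfold fscale.
  rewrite !kcomb_val; unfold scale_coefs; rewrite csum_map, csum_mult_l.
  apply csum_ext; intros; simpl; ring.
Qed.

Section Totality.
Variables (rho : R) (a : nat -> R).
Hypothesis Ha : forall n, (1 <= n)%nat -> 0 <= a n.
Hypothesis Hconv : kernel_convergent rho a.
Variable H : (Hrho rho -> C) -> Prop.
Variable ip : (Hrho rho -> C) -> (Hrho rho -> C) -> C.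
Hypothesis HH : is_RKHS rho a H ip.
Variable alpha : R.
Hypothesis Halpha : rho < alpha.

Lemma is_series_kappa_diag_term b : rho < b ->
  is_series (kappa_diag_term a b) (Re (kappa a (b, 0) (b, 0))).
Proof.
  intros Hb. destruct (is_series_kappa rho a (b, 0) (b, 0) Hconv Hb Hb) as [HRe _].
  eapply is_series_ext; [|exact HRe]. intros k; unfold kterm, kappa_diag_term.
  match goal with |- ?x = ?y => change (x = y :> R) end.
  replace ((b, 0) + Cconj (b, 0))%C with ((b + b)%R, 0%R) by ceq.
  rewrite npow_neg_real. unfold Cmult, RtoC, Re; cbn [fst snd].
  replace (- (b + b) * ln (INR (S k))) with (- b * ln (INR (S k)) + - b * ln (INR (S k))) by ring.
  rewrite exp_plus. ring.
Qed.

Definition line_span (g : Hrho rho -> C) : Prop := exists l, on_line alpha l /\ g = kcomb rho a l.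

Lemma on_line_in_half_plane l : on_line alpha l -> in_half_plane rho l.
Proof. intros Hl p Hp; rewrite (Hl p Hp); exact Halpha. Qed.

Lemma line_span_in_H g : line_span g -> H g.
Proof. intros [l [Hl ->]]; apply (kcomb_in_H rho a H ip HH), on_line_in_half_plane, Hl. Qed.

Lemma line_span_zero : line_span fzero.
Proof. exists nil; split; [intros p []|reflexivity]. Qed.

Lemma line_span_add g1 g2 : line_span g1 -> line_span g2 -> line_span (fadd g1 g2).
Proof.
  intros [l1 [H1 ->]] [l2 [H2 ->]]. exists (l1 ++ l2).
  split; [apply on_line_app; auto|symmetry; apply kcomb_app].
Qed.

Lemma line_span_scale c g : line_span g -> line_span (fscale c g).
Proof.
  intros [l [Hl ->]]. exists (scale_coefs c l).
  split; [apply on_line_scale_coefs, Hl|symmetry; apply kcomb_scale_coefs].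
Qed.

Lemma kernel_near_line_span t : rho < Re t ->
  forall e, 0 < e -> exists g, line_span g /\ hnorm ip (fsub (kfun rho a t) g) < e.
Proof.
  intros Ht e He.
  destruct (line_approx_err_small a alpha t _ _ Ha (is_series_kappa_diag_term (Re t) Ht)
              (is_series_kappa_diag_term alpha Halpha) (e * e) ltac:(nra)) as [dl [M [N Hsmall]]].
  set (l := line_approx alpha t dl M N).
  assert (Hl : on_line alpha l) by apply on_line_line_approx.
  exists (kcomb rho a l); split; [exists l; auto|].
  set (err := (RtoC 1, t) :: scale_coefs (RtoC (-1)) l).
  assert (Herr : in_half_plane rho err).
  { intros p [<-|Hp]; [exact Ht|].
    apply (on_line_in_half_plane (scale_coefs (-1) l)); [apply on_line_scale_coefs, Hl|exact Hp]. }
  replace (fsub (kfun rho a t) (kcomb rho a l)) with (kcomb rho a err).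
  2: { apply functional_extensionality; intros s. unfold err, fsub; simpl.
       rewrite kcomb_scale_coefs. unfold fadd, fscale; ring. }
  rewrite hnorm_nrm2. apply sqrt_lt_of_lt_sqr; auto.
  { apply (nrm2_nonneg _ _ (rkhs_hilbert rho a H ip HH)), (kcomb_in_H rho a H ip HH), Herr. }
  apply Hsmall. eapply is_series_ext; [|apply (nrm2_kcomb rho a Hconv H ip HH err Herr)].
  intros k; unfold err; rewrite kcomb_coef_cons, kcomb_coef_scale_coefs.
  apply (f_equal (fun z => a (S k) * Cmod z ^ 2)); unfold l; ceq.
Qed.

Lemma line_span_orthogonal_zero h : H h ->
  (forall g, line_span g -> rip ip h g = 0) -> forall s, h s = 0%C.
Proof.
  intros Hh Horth [t Ht].
  pose proof (rkhs_hilbert rho a H ip HH) as HFS.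
  pose proof (kfun_in_H rho a H ip HH t Ht) as HK.
  pose proof HH as [_ [_ Hrep]]. rewrite <- (Hrep h (exist _ t Ht) Hh); simpl.
  apply (ip_eq0_of_rip_scale H ip HFS); auto. intros c.
  apply (rip_eq0_of_approx H ip HFS line_span line_span_in_H); auto.
  { apply (hfs_scale _ _ HFS); auto. }
  intros e He.
  destruct (kernel_near_line_span t Ht (e / (Cmod c + 1))) as [g [Hg Hclose]].
  { pose proof (Cmod_ge_0 c); apply Rdiv_lt_0_compat; lra. }
  exists (fscale c g); split; [apply line_span_scale, Hg|].
  replace (fsub (fscale c (kfun rho a t)) (fscale c g)) with (fscale c (fsub (kfun rho a t) g))
    by (apply functional_extensionality; intros; unfold fscale, fsub, Cminus; ring).
  rewrite (hnorm_scale H ip HFS) by (apply (H_sub H ip HFS); auto; apply line_span_in_H, Hg).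
  pose proof (Cmod_ge_0 c).
  apply Rle_lt_trans with (Cmod c * (e / (Cmod c + 1))).
  - apply Rmult_le_compat_l; lra.
  - replace (Cmod c * (e / (Cmod c + 1))) with (e - e / (Cmod c + 1)) by (field; lra).
    assert (0 < e / (Cmod c + 1)) by (apply Rdiv_lt_0_compat; lra). lra.
Qed.

Theorem line_span_dense f : H f -> forall e, 0 < e ->
  exists g, line_span g /\ hnorm ip (fsub f g) < e.
Proof.
  apply (dense_of_orthogonal_trivial H ip (rkhs_hilbert rho a H ip HH) line_span line_span_in_H
           line_span_zero line_span_add (fun r => line_span_scale (RtoC r))).
  exact line_span_orthogonal_zero.
Qed.

End Totality.

Lemma klincomb_ext rho a alpha bs c c' : (forall b, In b bs -> c b = c' b) ->
  klincomb rho a alpha bs c = klincomb rho a alpha bs c'.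
Proof. induction bs; simpl; intros Hc; auto. rewrite Hc, IHbs; auto. Qed.

Lemma klincomb_add_coef rho a alpha bs c b d : NoDup bs -> In b bs ->
  klincomb rho a alpha bs (fun x => if Req_EM_T x b then (c x + d)%C else c x) =
  fadd (fscale d (kfun rho a (alpha, b))) (klincomb rho a alpha bs c).
Proof.
  induction bs as [|x bs IH]; intros Hnd Hb; [destruct Hb|].
  inversion Hnd as [|? ? Hx Hnd']; subst; simpl.
  apply functional_extensionality; intros s; unfold fadd, fscale.
  destruct (Req_EM_T x b) as [->|Hxb].
  - rewrite (klincomb_ext _ _ _ bs _ c); [ring|].
    intros y Hy; destruct (Req_EM_T y b); [subst; contradiction|reflexivity].
  - destruct Hb as [->|Hb]; [contradiction|]. rewrite IH; auto. unfold fadd, fscale; ring.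
Qed.

Lemma kcomb_on_line_as_klincomb rho a alpha l : on_line alpha l ->
  exists bs c, NoDup bs /\ klincomb rho a alpha bs c = kcomb rho a l.
Proof.
  induction l as [|[d [u b]] l IH]; intros Hl.
  - exists nil, (fun _ => RtoC 0); split; [constructor|reflexivity].
  - destruct IH as [bs [c [Hnd Heq]]]; [intros p Hp; apply Hl; simpl; auto|].
    assert (Hu : u = alpha) by exact (Hl _ (or_introl eq_refl)). subst u.
    simpl; rewrite <- Heq.
    destruct (in_dec Req_EM_T b bs) as [Hin|Hnin].
    + exists bs, (fun x => if Req_EM_T x b then (c x + d)%C else c x).
      split; [exact Hnd|apply klincomb_add_coef; auto].
    + exists (b :: bs), (fun x => if Req_EM_T x b then d else c x).
      split; [constructor; auto|]. simpl. destruct (Req_EM_T b b) as [_|]; [|contradiction].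
      f_equal. apply klincomb_ext; intros y Hy.
      destruct (Req_EM_T y b); [subst; contradiction|reflexivity].
Qed.

(** * Linear independence *)

Lemma csum_mult_sub_shift (d w chi chi' : R -> C) (z : C) l :
  (forall b, chi' b = (w b * chi b)%C) ->
  csum (fun b => d b * (w b - z) * chi b)%C l
  = (csum (fun b => d b * chi' b) l - z * csum (fun b => d b * chi b) l)%C.
Proof.
  intros Hchi. transitivity (csum (fun b => d b * chi' b + - z * (d b * chi b))%C l).
  - apply csum_ext; intros b _; rewrite Hchi; ring.
  - rewrite csum_plus, <- csum_mult_l; ring.
Qed.

Lemma char_sums_shift (chi : nat -> nat -> R -> C) (d w : R -> C) b0 rest :
  (forall j k, exists j' k', forall b, chi j' k' b = (w b * chi j k b)%C) ->
  (forall j k, csum (fun b => d b * chi j k b)%C (b0 :: rest) = 0%C) ->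
  forall j k, csum (fun b => d b * (w b - w b0) * chi j k b)%C rest = 0%C.
Proof.
  intros Hw Hsum j k. destruct (Hw j k) as [j' [k' Hjk]].
  pose proof (csum_mult_sub_shift d w (chi j k) (chi j' k') (w b0) (b0 :: rest) Hjk) as E.
  rewrite !Hsum in E.
  transitivity (d b0 * (w b0 - w b0) * chi j k b0
    + csum (fun b => d b * (w b - w b0) * chi j k b) rest)%C; [ring|].
  change (csum (fun b => d b * (w b - w b0) * chi j k b)%C (b0 :: rest) = 0%C).
  rewrite E; ring.
Qed.

(* Dedekind's lemma for the characters [(j, k) |-> e^(i (j phi_b + k psi_b))] of [N^2]. *)
Lemma char_sum_coef_zero (phi psi : R -> R) (d : R -> C) bs : NoDup bs ->
  (forall b b', In b bs -> In b' bs -> b <> b' ->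
     cis (phi b) <> cis (phi b') \/ cis (psi b) <> cis (psi b')) ->
  (forall j k, csum (fun b => d b * cis (INR j * phi b + INR k * psi b))%C bs = 0%C) ->
  forall b, In b bs -> d b = 0%C.
Proof.
  set (chi := fun j k b => cis (INR j * phi b + INR k * psi b)).
  revert d. induction bs as [|b0 rest IH]; intros d Hnd Hdist Hsum; [intros b []|].
  change (forall j k, csum (fun b => d b * chi j k b)%C (b0 :: rest) = 0%C) in Hsum.
  inversion Hnd as [|? ? Hb0 Hnd']; subst.
  assert (Hshift : forall w : R -> C,
    (forall j k, exists j' k', forall b, chi j' k' b = (w b * chi j k b)%C) ->
    forall b, In b rest -> (d b * (w b - w b0))%C = 0%C).
  { intros w Hw. apply IH; auto.
    - intros b b' Hb Hb' Hbb'; apply Hdist; simpl; auto.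
    - exact (char_sums_shift chi d w b0 rest Hw Hsum). }
  assert (Hphi : forall b, In b rest -> (d b * (cis (phi b) - cis (phi b0)))%C = 0%C).
  { apply (Hshift (fun b => cis (phi b))); intros j k; exists (S j), k; intros b.
    unfold chi; rewrite <- cis_add, S_INR; f_equal; ring. }
  assert (Hpsi : forall b, In b rest -> (d b * (cis (psi b) - cis (psi b0)))%C = 0%C).
  { apply (Hshift (fun b => cis (psi b))); intros j k; exists j, (S k); intros b.
    unfold chi; rewrite <- cis_add, S_INR; f_equal; ring. }
  assert (Hrest : forall b, In b rest -> d b = 0%C).
  { intros b Hb. assert (Hne : b <> b0) by (intros ->; contradiction).
    destruct (Hdist b b0 ltac:(simpl; auto) ltac:(simpl; auto) Hne) as [Hz|Hz].
    - destruct (Cmult_integral _ _ (Hphi b Hb)) as [|E]; [auto|].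
      destruct (Cminus_eq_contra _ _ Hz E).
    - destruct (Cmult_integral _ _ (Hpsi b Hb)) as [|E]; [auto|].
      destruct (Cminus_eq_contra _ _ Hz E). }
  intros b [<-|Hb]; auto.
  specialize (Hsum 0%nat 0%nat); simpl in Hsum. unfold chi in Hsum.
  rewrite csum_zero in Hsum by (intros x Hx; rewrite Hrest; auto; ring).
  rewrite !Rmult_0_l, Rplus_0_l, cis_0 in Hsum.
  replace (d b0) with (d b0 * 1 + 0)%C by ring. exact Hsum.
Qed.

Lemma pow_neq_of_coprime p q m n : Nat.gcd p q = 1%nat -> (2 <= p)%nat -> (1 <= m)%nat ->
  (p ^ m <> q ^ n)%nat.
Proof.
  intros Hg Hp Hm E.
  assert (Hd : Nat.divide p (q ^ n)).
  { rewrite <- E. destruct m; [lia|]. rewrite Nat.pow_succ_r'. apply Nat.divide_factor_l. }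
  clear E. induction n as [|n IH].
  - apply Nat.divide_1_r in Hd; lia.
  - apply IH. rewrite Nat.pow_succ_r' in Hd. eapply Nat.gauss; eauto.
Qed.

Lemma cis_eq_diff x y : cis x = cis y -> exists k : Z, x - y = IZR k * PI.
Proof.
  intros E. apply cis_eq_1.
  replace (x - y) with (x + - y) by ring. rewrite cis_add, E, <- cis_add, Rplus_opp_r.
  apply cis_0.
Qed.

Lemma ln_INR_pos p : (2 <= p)%nat -> 0 < ln (INR p).
Proof. intros Hp. rewrite <- ln_1. apply ln_increasing; [lra|apply (lt_INR 1); lia]. Qed.

Lemma INR_Zabs_nat k : INR (Z.abs_nat k) = Rabs (IZR k).
Proof. rewrite INR_IZR_INZ, Nat2Z.inj_abs_nat, abs_IZR; reflexivity. Qed.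

Lemma cis_log_pair_inj p q b b' : Nat.gcd p q = 1%nat -> (2 <= p)%nat -> (2 <= q)%nat ->
  cis (b * ln (INR p)) = cis (b' * ln (INR p)) -> cis (b * ln (INR q)) = cis (b' * ln (INR q)) ->
  b = b'.
Proof.
  intros Hg Hp Hq Ep Eq. apply NNPP; intros Hbb.
  pose proof (ln_INR_pos p Hp) as Lp. pose proof (ln_INR_pos q Hq) as Lq. pose proof PI_RGT_0.
  destruct (cis_eq_diff _ _ Ep) as [k1 Hk1]. destruct (cis_eq_diff _ _ Eq) as [k2 Hk2].
  assert (Hk2z : k2 <> 0%Z).
  { intros ->. assert (E : (b - b') * ln (INR q) = 0) by lra.
    apply Rmult_integral in E as [|]; lra. }
  assert (Erel : IZR k1 * ln (INR q) = IZR k2 * ln (INR p)).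
  { apply Rmult_eq_reg_r with PI; [|lra].
    replace (IZR k1 * ln (INR q) * PI) with (IZR k1 * PI * ln (INR q)) by ring.
    replace (IZR k2 * ln (INR p) * PI) with (IZR k2 * PI * ln (INR p)) by ring.
    rewrite <- Hk1, <- Hk2; ring. }
  apply (f_equal Rabs) in Erel. rewrite !Rabs_mult, !(Rabs_right (ln _)) in Erel by lra.
  rewrite <- !INR_Zabs_nat, <- !ln_pow in Erel by (apply (lt_INR 0); lia).
  apply ln_inv in Erel; try (apply pow_lt, (lt_INR 0); lia).
  rewrite <- !pow_INR in Erel. apply INR_eq in Erel.
  apply (pow_neq_of_coprime p q (Z.abs_nat k2) (Z.abs_nat k1) Hg Hp); [lia|auto].
Qed.

Lemma klincomb_as_kcomb rho a alpha bs c :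
  klincomb rho a alpha bs c = kcomb rho a (map (fun b => (c b, (alpha, b))) bs).
Proof. induction bs; simpl; auto. rewrite IHbs; reflexivity. Qed.

Lemma kcomb_coef_line alpha bs c k :
  kcomb_coef (map (fun b => (c b, (alpha, b))) bs) k
  = (RtoC (exp (- alpha * ln (INR (S k)))) * csum (fun b => c b * cis (b * ln (INR (S k)))) bs)%C.
Proof.
  unfold kcomb_coef. rewrite csum_map, csum_mult_l. apply csum_ext; intros b _; cbn [fst snd].
  replace (Cconj (alpha, b)) with (alpha, - b) by reflexivity.
  rewrite npow_neg_cis, Ropp_involutive. ring.
Qed.

Lemma supp_pow_mult a p q : admissible a -> supp a p -> supp a q ->
  forall j k, supp a (p ^ S j * q ^ S k).
Proof.
  intros [_ [Hmul _]] Hp Hq.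
  assert (Hpow : forall x, supp a x -> forall j, supp a (x ^ S j)).
  { intros x Hx j; induction j; [simpl; rewrite Nat.mul_1_r; auto|].
    rewrite Nat.pow_succ_r'; apply Hmul; auto. }
  intros j k; apply Hmul; apply Hpow; auto.
Qed.

Section LinearIndependence.
Variables (rho : R) (a : nat -> R).
Hypothesis Ha : forall n, (1 <= n)%nat -> 0 <= a n.
Hypothesis Hconv : kernel_convergent rho a.
Variable H : (Hrho rho -> C) -> Prop.
Variable ip : (Hrho rho -> C) -> (Hrho rho -> C) -> C.
Hypothesis HH : is_RKHS rho a H ip.
Variable alpha : R.
Hypothesis Halpha : rho < alpha.

Lemma dirichlet_poly_vanishes_on_supp bs c :
  (forall s, klincomb rho a alpha bs c s = 0%C) ->
  forall n, supp a n -> csum (fun b => c b * cis (b * ln (INR n)))%C bs = 0%C.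
Proof.
  intros Hz n [Hn Han].
  set (l := map (fun b => (c b, (alpha, b))) bs).
  assert (Hl : in_half_plane rho l).
  { intros p Hp; apply in_map_iff in Hp as [b [<- _]]; exact Halpha. }
  assert (Hzero : kcomb rho a l = fzero).
  { apply functional_extensionality; intros s. unfold l; rewrite <- klincomb_as_kcomb. apply Hz. }
  pose proof (nrm2_kcomb rho a Hconv H ip HH l Hl) as Hs.
  rewrite Hzero in Hs. unfold nrm2 in Hs.
  pose proof (rkhs_hilbert rho a H ip HH) as HFS.
  rewrite (ip_zero_l H ip HFS) in Hs by apply (hfs_zero _ _ HFS).
  destruct n as [|k]; [lia|].
  pose proof (is_series_nonneg_zero _
    (fun k => Rmult_le_pos _ _ (Ha (S k) ltac:(lia)) (pow2_ge_0 _)) Hs k) as Hk.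
  apply Rmult_integral in Hk as [Hk|Hk]; [contradiction|].
  assert (Hc : kcomb_coef l k = 0%C)
    by (apply Cmod_eq_0, NNPP; intros Hne; exact (pow_nonzero _ 2 Hne Hk)).
  unfold l in Hc; rewrite kcomb_coef_line in Hc.
  apply Cmult_integral in Hc as [Hc|Hc]; auto.
  apply (f_equal Re) in Hc. change (exp (- alpha * ln (INR (S k))) = 0) in Hc.
  pose proof (exp_pos (- alpha * ln (INR (S k)))). lra.
Qed.

Theorem line_kernels_independent : admissible a -> forall bs c, NoDup bs ->
  (forall s, klincomb rho a alpha bs c s = 0%C) -> forall b, In b bs -> c b = 0%C.
Proof.
  intros Hadm bs c Hnd Hz.
  pose proof Hadm as [_ [_ [p [q [Hp [Hq [Hp1 [Hq1 Hg]]]]]]]].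
  assert (Hp2 : (2 <= p)%nat) by (destruct Hp; lia).
  assert (Hq2 : (2 <= q)%nat) by (destruct Hq; lia).
  set (phi := fun b => b * ln (INR p)). set (psi := fun b => b * ln (INR q)).
  assert (Hd : forall b, In b bs -> (c b * cis (phi b) * cis (psi b))%C = 0%C).
  { apply (char_sum_coef_zero phi psi); auto.
    - intros b b' _ _ Hbb'.
      destruct (classic (cis (phi b) = cis (phi b'))) as [Ep|Hne]; [right|left; exact Hne].
      intros Eq; apply Hbb', (cis_log_pair_inj p q); auto.
    - intros j k.
      rewrite <- (dirichlet_poly_vanishes_on_supp bs c Hz _ (supp_pow_mult a p q Hadm Hp Hq j k)).
      apply csum_ext; intros b _.
      assert (0 < INR p) by (apply (lt_INR 0); lia). assert (0 < INR q) by (apply (lt_INR 0); lia).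
      rewrite mult_INR, !pow_INR, ln_mult, !ln_pow by (try apply pow_lt; auto).
      replace (b * (INR (S j) * ln (INR p) + INR (S k) * ln (INR q)))
        with (phi b + (psi b + (INR j * phi b + INR k * psi b)))
        by (unfold phi, psi; rewrite !S_INR; ring).
      rewrite !cis_add; ring. }
  intros b Hb. specialize (Hd b Hb).
  apply Cmult_integral in Hd as [Hd|Hd]; [apply Cmult_integral in Hd as [Hd|Hd]|]; auto;
    destruct (cis_neq_0 _ Hd).
Qed.

End LinearIndependence.

Theorem corollary5p6 (rho : R) (a : nat -> R)
  (Ha_nonneg : forall n : nat, (1 <= n)%nat -> 0 <= a n)
  (Ha_adm : admissible a)
  (Hconv : kernel_convergent rho a)
  (H : (Hrho rho -> C) -> Prop)
  (ip : (Hrho rho -> C) -> (Hrho rho -> C) -> C)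
  (HH : is_RKHS rho a H ip) :
  forall alpha : R, rho < alpha ->
    (* linear independence of {kappa_{a, alpha + i b} : b in R} *)
    (forall (bs : list R) (c : R -> C), NoDup bs ->
       (forall s : Hrho rho, klincomb rho a alpha bs c s = RtoC 0) ->
       forall b, In b bs -> c b = RtoC 0) /\
    (* totality: the linear span is dense in H *)
    (forall f : Hrho rho -> C, H f ->
       forall eps : R, 0 < eps ->
       exists (bs : list R) (c : R -> C),
         hnorm ip (fsub f (klincomb rho a alpha bs c)) < eps).
Proof.
  intros alpha Halpha. split.
  - exact (line_kernels_independent rho a Ha_nonneg Hconv H ip HH alpha Halpha Ha_adm).
  - intros f Hf eps Heps.
    destruct (line_span_dense rho a Ha_nonneg Hconv H ip HH alpha Halpha f Hf eps Heps)
      as [g [[l [Hl ->]] Hfg]].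
    destruct (kcomb_on_line_as_klincomb rho a alpha l Hl) as [bs [c [_ Heq]]].
    exists bs, c. rewrite Heq. exact Hfg.
Qed.
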